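(* Fix the finite sets $S,B$ and the transition function $p$, and identify a game with its payoff function $u\in\mathbb{R}^{2\times S\times B}$. Let a game $G$ be given. (i) If condition B holds for $G$, then every neighborhood of $G$ contains a game $G'$ with $\widehat{E}_{G'}(\mathcal{M})\neq\emptyset$. (ii) If condition B does not hold for $G$, then there is a neighborhood $\mathcal{N}$ of $G$ such that condition B does not hold for any game in $\mathcal{N}$.
   Context: Setting: finite state set $S$, message set $A=S$, finite action set $B$ of the receiver, an irreducible aperiodic Markov chain on $S$ with transition function $p$ and invariant measure $m\in\Delta(S)$; a game is a payoff function $u=(u^1,u^2):S\times B\to\mathbb{R}^2$ (player 1 = sender, player 2 = receiver), extended linearly to mixed actions. $\mathcal{M}\subset\Delta(S\times A)$ is the set of distributions with both marginals equal to $m$; $\mu_0(s,s)=m(s)$, $\mu_0(s,a)=0$ for $s\ne a$. For $\mu\in\mathcal{M}$ and $y:A\to\Delta(B)$, $U(\mu,y)=\sum_{s,a}\mu(s,a)u(s,y(\cdot\mid a))$, and $v^2=\max_{b\in B}\sum_s m(s)u^2(s,b)$ (all computed with the payoff function of the game under consideration). Conditions on $y$: (C1) $U^1(\mu_0,y)\ge U^1(\mu,y)$ for all $\mu\in\mathcal{M}$; (C2) $U^2(\mu_0,y)\ge v^2$; (D1) $U^1(\mu_0,y)>U^1(\mu,y)$ for all $\mu\in\mathcal{M}$, $\mu\ne\mu_0$; (D2) $U^2(\mu_0,y)>v^2$. $\widehat{E}_{G}(\mathcal{M})$ is the set of vectors $U(\mu_0,y)$ with $y$ satisfying (D1),(D2)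 in game $G$. Condition B for a game: there is a non-constant map $y:S\to\Delta(B)$ satisfying (C1) and (C2) in that game. *)

From HB Require Import structures.
From mathcomp Require Import all_boot all_order all_algebra.
From mathcomp Require Import reals.
Set Implicit Arguments. Unset Strict Implicit. Unset Printing Implicit Defensive.
Import Order.TTheory GRing.Theory Num.Theory.
Local Open Scope ring_scope.

Section Defs.
Variables (R : realType) (S B : finType).

Definition mc_stochastic (p : S -> S -> R) : Prop :=
  (forall s t, 0 <= p s t) /\ (forall s, \sum_t p s t = 1).

Fixpoint nstep (p : S -> S -> R) (n : nat) (s t : S) : R :=
  match n with
  | 0 => (s == t)%:R
  | k.+1 => \sum_u nstep p k s u * p u t
  end.

Definition mc_irreducible (p : S -> S -> R) : Prop :=
  forall s t, exists n, 0 < nstep p n s t.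

(** Aperiodic: every state has period 1, i.e. the gcd of the return times
    {n >= 1 | p^(n)(s,s) > 0} equals 1. *)
Definition mc_aperiodic (p : S -> S -> R) : Prop :=
  forall s (d : nat), (forall n, (0 < n)%N -> 0 < nstep p n s s -> (d %| n)%N) -> d = 1%N.

Definition distrib (m : S -> R) : Prop := (forall s, 0 <= m s) /\ \sum_s m s = 1.
Definition mc_invariant (p : S -> S -> R) (m : S -> R) : Prop :=
  distrib m /\ forall t, \sum_s m s * p s t = m t.

Definition game := ((S -> B -> R) * (S -> B -> R))%type.

(** Receiver strategies y : A -> Delta(B), with A = S. *)
Definition strategy (y : S -> B -> R) : Prop :=
  forall a, (forall b, 0 <= y a b) /\ \sum_b y a b = 1.

Definition mixpay (v : S -> B -> R) (s : S) (x : B -> R) : R := \sum_b x b * v s b.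

Definition inM (m : S -> R) (mu : S -> S -> R) : Prop :=
  (forall s a, 0 <= mu s a) /\ \sum_s \sum_a mu s a = 1 /\
  (forall s, \sum_a mu s a = m s) /\ (forall a, \sum_s mu s a = m a).

Definition mu0 (m : S -> R) (s a : S) : R := if s == a then m s else 0.

Definition Upay (v : S -> B -> R) (mu : S -> S -> R) (y : S -> B -> R) : R :=
  \sum_s \sum_a mu s a * mixpay v s (y a).

(** v^2 = max_b sum_s m(s) u^2(s,b) (B nonempty; the seed is irrelevant then). *)
Definition v2 (m : S -> R) (G : game) : R :=
  let f b := \sum_s m s * G.2 s b in
  \big[Num.max/(match [pick b : B] with Some b0 => f b0 | None => 0 end)]_b f b.

Definition C1 (m : S -> R) (G : game) (y : S -> B -> R) : Prop :=
  forall mu, inM m mu -> Upay G.1 mu y <= Upay G.1 (mu0 m) y.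
Definition C2 (m : S -> R) (G : game) (y : S -> B -> R) : Prop :=
  v2 m G <= Upay G.2 (mu0 m) y.
Definition D1 (m : S -> R) (G : game) (y : S -> B -> R) : Prop :=
  forall mu, inM m mu -> mu <> mu0 m -> Upay G.1 mu y < Upay G.1 (mu0 m) y.
Definition D2 (m : S -> R) (G : game) (y : S -> B -> R) : Prop :=
  v2 m G < Upay G.2 (mu0 m) y.

Definition Ehat (m : S -> R) (G : game) : R * R -> Prop :=
  fun w => exists y, strategy y /\ D1 m G y /\ D2 m G y /\
                     w = (Upay G.1 (mu0 m) y, Upay G.2 (mu0 m) y).

Definition condB (m : S -> R) (G : game) : Prop :=
  exists y, strategy y /\ (exists a a', y a <> y a') /\ C1 m G y /\ C2 m G y.

Definition near_game (eps : R) (G G' : game) : Prop :=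
  forall s b, `|G'.1 s b - G.1 s b| < eps /\ `|G'.2 s b - G.2 s b| < eps.

End Defs.

(* (i) Let y be a non-constant strategy satisfying C1 and C2.  Perturb the
   sender's payoff by delta * y plus a small tilt, the receiver's payoff by
   delta * (y - ybar), and mix a little of a strategy z derived from the
   perturbed sender payoff into y.  Because both marginals of any mu in M
   equal m, the sender's loss from mu becomes the C1 loss plus a positive
   combination of the squared distances |y s - y a|^2 and
   |centered s - centered a|^2, strictly positive off the diagonal (D1).
   The receiver gains delta times the m-variance of y, which is positive as
   m > 0 and y is non-constant, while v2 is unchanged (D2).
   (ii) A condition-B witness can be normalized as y = c + tau * e with c mixed,
   0 < tau <= |S x B|, |e| <= 1 and e spread out.  If games G_n -> G satisfy
   condition B, these data have a convergent subsequence, and c + eta * e is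
   a witness for G for a suitable eta > 0. *)
From HB Require Import structures.
From mathcomp Require Import all_boot all_order all_algebra.
From mathcomp Require Import reals ring lra.
From mathcomp Require Import boolp classical_sets topology normedtype sequences.
Import Order.TTheory GRing.Theory Num.Theory.
Import numFieldNormedType.Exports.
Set Implicit Arguments. Unset Strict Implicit. Unset Printing Implicit Defensive.
Local Open Scope classical_set_scope.
Local Open Scope ring_scope.

Section NearZero.
Variable R : realType.

Lemma near0_abs_lt (k c : R) : 0 < c -> \forall x \near 0^'+, `|x * k| < c.
Proof.
move=> c0; have k1 : 0 < `|k| + 1 by rewrite ltr_pwDr.
have ck : 0 < c / (`|k| + 1) by rewrite divr_gt0.
near=> x.
have x0 : 0 < x by near: x; exact: nbhs_right_gt.
have xc : x < c / (`|k| + 1) by near: x; exact: nbhs_right_lt.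
rewrite normrM gtr0_norm //.
apply: le_lt_trans (_ : x * (`|k| + 1) < c).
  by apply: ler_wpM2l; [exact: ltW | rewrite lerDl].
by rewrite -ltr_pdivlMr.
Unshelve. all: by end_near.
Qed.

Lemma near0_affine_gt0 (a k : R) : 0 < a -> \forall x \near 0^'+, 0 < a + x * k.
Proof.
move=> a0; apply: filterS (near0_abs_lt k a0) => x.
rewrite ltr_norml => /andP[h _]; lra.
Qed.

Lemma near0_affine_neq0 (a k : R) : k != 0 -> \forall x \near 0^'+, a + x * k != 0.
Proof.
move=> k0; have [->|a0] := eqVneq a 0.
  apply: filterS (nbhs_right_gt 0) => x x0.
  by rewrite add0r mulf_neq0 // gt_eqF.
have aa : 0 < `|a| by rewrite normr_gt0.
apply: filterS (near0_abs_lt k aa) => x; apply: contraTneq => /eqP.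
by rewrite addr_eq0 => /eqP ->; rewrite normrN ltxx.
Qed.

End NearZero.

Section Payoffs.
Variables (R : realType) (S B : finType).
Implicit Types (m : S -> R) (mu : S -> S -> R) (v x : S -> B -> R).

Definition mixed (c : B -> R) := (forall b, 0 <= c b) /\ \sum_b c b = 1.

Definition gain v x s a := mixpay v s (x s) - mixpay v s (x a).

Definition dsum mu (F : S -> S -> R) := \sum_s \sum_a mu s a * F s a.

Definition sqdist (c d : B -> R) := \sum_b (c b - d b) ^+ 2.

Definition mean_pay m v x := \sum_s m s * mixpay v s (x s).

Lemma gainE v x s a : gain v x s a = \sum_b (x s b - x a b) * v s b.
Proof. by rewrite /gain /mixpay -sumrB; apply: eq_bigr => b _; rewrite mulrBl. Qed.

Lemma mixed_le1 (c : B -> R) b : mixed c -> c b <= 1.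
Proof. by case=> c0 <-; rewrite (bigD1 b) //= lerDl sumr_ge0. Qed.

Lemma mixpay_comb v s (c d : B -> R) (k l : R) :
  mixpay v s (fun b => k * c b + l * d b) = k * mixpay v s c + l * mixpay v s d.
Proof.
rewrite /mixpay !mulr_sumr -big_split /=; apply: eq_bigr => b _; ring.
Qed.

Lemma Upay_mu0 m v x : Upay v (mu0 m) x = mean_pay m v x.
Proof.
apply: eq_bigr => s _; rewrite (bigD1 s) //= /mu0 eqxx big1 ?addr0 // => a.
by rewrite eq_sym => /negbTE ->; rewrite mul0r.
Qed.

Lemma Upay_mu0_sub m mu v x : inM m mu ->
  Upay v (mu0 m) x - Upay v mu x = dsum mu (gain v x).
Proof.
case=> _ [_ [row _]]; rewrite Upay_mu0 -sumrB; apply: eq_bigr => s _.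
by rewrite -row mulr_suml -sumrB; apply: eq_bigr => a _; rewrite mulrBr.
Qed.

Lemma dsumD mu F F' : dsum mu (fun s a => F s a + F' s a) = dsum mu F + dsum mu F'.
Proof.
rewrite /dsum -big_split; apply: eq_bigr => s _; rewrite -big_split.
by apply: eq_bigr => a _; rewrite mulrDr.
Qed.

Lemma dsumB mu F F' : dsum mu (fun s a => F s a - F' s a) = dsum mu F - dsum mu F'.
Proof.
rewrite /dsum -sumrB; apply: eq_bigr => s _; rewrite -sumrB.
by apply: eq_bigr => a _; rewrite mulrBr.
Qed.

Lemma eq_dsum mu F F' : (forall s a, F s a = F' s a) -> dsum mu F = dsum mu F'.
Proof. by move=> FF'; apply: eq_bigr => s _; apply: eq_bigr => a _; rewrite FF'. Qed.

Lemma dsumZ mu k F : dsum mu (fun s a => k * F s a) = k * dsum mu F.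
Proof.
rewrite /dsum mulr_sumr; apply: eq_bigr => s _; rewrite mulr_sumr.
by apply: eq_bigr => a _; rewrite mulrCA.
Qed.

Lemma dsum_marginal m mu (h : S -> R) : inM m mu ->
  dsum mu (fun _ a => h a) = dsum mu (fun s _ => h s).
Proof.
case=> _ [_ [row col]]; rewrite /dsum exchange_big /=.
transitivity (\sum_a m a * h a); first by apply: eq_bigr => a _; rewrite -col mulr_suml.
by apply: eq_bigr => s _; rewrite -row mulr_suml.
Qed.

(* Both marginals of mu are m, so the terms |x s|^2 / 2 and |x a|^2 / 2 cancel. *)
Lemma dsum_gain_self m mu x : inM m mu ->
  dsum mu (gain x x) = dsum mu (fun s a => sqdist (x s) (x a) / 2).
Proof.
move=> muM; pose nx s := sqdist (x s) (fun=> 0) / 2.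
have split_gain s a : gain x x s a = sqdist (x s) (x a) / 2 + (nx s - nx a).
  rewrite /gain /mixpay /nx /sqdist -mulrBl -!sumrB !mulr_suml -big_split /=.
  by apply: eq_bigr => b _; field.
rewrite (eq_dsum _ split_gain) dsumD -[RHS]addr0; congr (_ + _).
by rewrite dsumB (dsum_marginal _ muM) subrr.
Qed.

Lemma inM_offdiag m mu : inM m mu -> mu <> mu0 m -> exists s a, s != a /\ 0 < mu s a.
Proof.
move=> [mu_ge0 [_ [row _]]] mu_neq; apply: contra_notP mu_neq => diag.
have off s a : s != a -> mu s a = 0.
  move=> sa; apply/eqP; rewrite eq_le mu_ge0 andbT leNgt; apply/negP => mu_gt0.
  by apply: diag; exists s, a.
apply/funext => s; apply/funext => a; rewrite /mu0; have [<-|] := eqVneq s a; last exact: off.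
by rewrite -row (bigD1 s) //= big1 ?addr0 // => a'; rewrite eq_sym => /off.
Qed.

Lemma dsum_gt0 m mu F : inM m mu -> mu <> mu0 m ->
  (forall s a, 0 <= F s a) -> (forall s a, s != a -> 0 < F s a) -> 0 < dsum mu F.
Proof.
move=> muM mu_neq F_ge0 F_gt0; have [s [a [sa mu_gt0]]] := inM_offdiag muM mu_neq.
have [mu_ge0 _] := muM.
have term_ge0 s' a' : 0 <= mu s' a' * F s' a' by rewrite mulr_ge0.
apply: lt_le_trans (_ : 0 < mu s a * F s a) _; first by rewrite mulr_gt0 ?F_gt0.
rewrite /dsum (bigD1 s) //= (bigD1 a) //= -addrA lerDl addr_ge0 //.
  by rewrite sumr_ge0.
by rewrite sumr_ge0 // => s' _; rewrite sumr_ge0.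
Qed.

Lemma sqdist_xx (c : B -> R) : sqdist c c = 0.
Proof. by rewrite /sqdist big1 // => b _; rewrite subrr expr0n. Qed.

Lemma sqdist_ge0 (c d : B -> R) : 0 <= sqdist c d.
Proof. by rewrite sumr_ge0 // => b _; rewrite sqr_ge0. Qed.

Lemma sqdist_gt0 (c d : B -> R) b : c b != d b -> 0 < sqdist c d.
Proof.
move=> cd; rewrite /sqdist (bigD1 b) //= ltr_pwDl ?sumr_ge0 // => [|b' _].
  by rewrite exprn_even_gt0 // subr_eq0.
by rewrite sqr_ge0.
Qed.

Lemma v2_ge m (G : game R S B) b : \sum_s m s * G.2 s b <= v2 m G.
Proof. exact: le_bigmax. Qed.

Lemma v2_attain m (G : game R S B) (b0 : B) : exists b, v2 m G = \sum_s m s * G.2 s b.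
Proof.
pose f b := \sum_s m s * G.2 s b.
exists [arg max_(b > b0) f b]%O; apply/eqP; rewrite eq_le v2_ge andbT.
case: arg_maxP => // bm _ bm_max; apply: bigmax_le => [|b _]; last exact: bm_max.
by case: pickP => [b _|/(_ b0)//]; exact: bm_max.
Qed.

Lemma v2_ext m (G G' : game R S B) :
  (forall b, \sum_s m s * G.2 s b = \sum_s m s * G'.2 s b) -> v2 m G = v2 m G'.
Proof.
move=> col; rewrite /v2 /=; case: pickP => [b _|_]; rewrite ?col;
by apply: eq_bigr => b' _; rewrite col.
Qed.

Lemma mean_pay_le_v2 m (G : game R S B) (c : B -> R) : mixed c ->
  mean_pay m G.2 (fun _ => c) <= v2 m G.
Proof.
case=> c_ge0 c_sum.
have -> : mean_pay m G.2 (fun _ => c) = \sum_b c b * \sum_s m s * G.2 s b.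
  rewrite /mean_pay /mixpay; under eq_bigr do rewrite mulr_sumr.
  rewrite exchange_big /=; apply: eq_bigr => b _; rewrite mulr_sumr.
  by apply: eq_bigr => s _; ring.
apply: le_trans (_ : \sum_b c b * v2 m G <= _).
  by apply: ler_sum => b _; rewrite ler_wpM2l ?v2_ge.
by rewrite -mulr_suml c_sum mul1r.
Qed.

Definition paybound v := \sum_s \sum_b `|v s b|.

Lemma weighted_sum_abs_le m (f : S -> R) : distrib m ->
  `|\sum_s m s * f s| <= \sum_s `|f s|.
Proof.
move=> [m_ge0 m_sum]; apply: le_trans (ler_norm_sum _ _ _) _; apply: ler_sum => s _.
rewrite normrM ger0_norm // ler_piMl //.
by rewrite -m_sum (bigD1 s) //= lerDl sumr_ge0.
Qed.

Lemma mean_pay_abs_le m v x : distrib m -> strategy x -> `|mean_pay m v x| <= paybound v.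
Proof.
move=> m_distr x_strat; apply: le_trans (weighted_sum_abs_le _ m_distr) _.
apply: ler_sum => s _; apply: le_trans (ler_norm_sum _ _ _) _; apply: ler_sum => b _.
have [x_ge0 _] := x_strat s; rewrite normrM ger0_norm // ler_piMl //.
exact: (mixed_le1 _ (x_strat s)).
Qed.

Lemma v2_le_paybound m (G : game R S B) (b0 : B) : distrib m -> v2 m G <= paybound G.2.
Proof.
move=> m_distr; have [b ->] := v2_attain m G b0.
apply: le_trans (ler_norm _) _; apply: le_trans (weighted_sum_abs_le _ m_distr) _.
by apply: ler_sum => s _; rewrite (bigD1 b) //= lerDl sumr_ge0.
Qed.

Lemma mean_pay_comb m v x w (k l : R) :
  mean_pay m v (fun a b => k * x a b + l * w a b) = k * mean_pay m v x + l * mean_pay m v w.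
Proof.
rewrite /mean_pay !mulr_sumr -big_split /=; apply: eq_bigr => s _.
by rewrite mixpay_comb; ring.
Qed.

End Payoffs.

Section Perturbation.
Variables (R : realType) (S B : finType) (m : S -> R) (G : game R S B) (y : S -> B -> R).
Variables (eps : R) (a0 a1 : S) (bb bo : B).
Hypotheses (m_gt0 : forall s, 0 < m s) (m_distr : distrib m) (y_strat : strategy y)
  (C1y : C1 m G y) (C2y : C2 m G y) (eps_gt0 : 0 < eps)
  (y_a0a1 : y a0 bb != y a1 bb) (bb_bo : bb != bo).

(* z is the uniform strategy shifted along the centred rows of u1_pert, so
   that against z a lie (s reports a) costs the sender
   scale * <centered s, centered s - centered a>; the tilt makes these rows
   pairwise distinct for small lam. *)
Definition delta := eps / 2.
Definition nB : R := #|B|%:R.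
Definition ybar b := \sum_a m a * y a b.
Definition tilt (s : S) (b : B) : R := (enum_rank s : nat)%:R * ((b == bb)%:R - (b == bo)%:R).
Definition u1_pert lam s b := G.1 s b + delta * y s b + lam * tilt s b.
Definition u2_pert s b := G.2 s b + delta * (y s b - ybar b).
Definition game_pert lam : game R S B := (u1_pert lam, u2_pert).
Definition centered lam s b := u1_pert lam s b - (\sum_b' u1_pert lam s b') / nB.
Definition scale lam := (nB * (\sum_s \sum_b `|centered lam s b| + 1))^-1.
Definition z lam a b := nB^-1 + scale lam * centered lam a b.
Definition y_pert th lam a b := (1 - th) * y a b + th * z lam a b.
Definition variance := \sum_s m s * sqdist (y s) ybar.
Definition bonus th lam s a :=
  (1 - th) * (delta * (sqdist (y s) (y a) / 2) + lam * gain tilt y s a)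
  + th * scale lam * (sqdist (centered lam s) (centered lam a) / 2).

Lemma nB_gt0 : 0 < nB.
Proof. by rewrite ltr0n; apply/card_gt0P; exists bb. Qed.

Lemma centered_sum lam s : \sum_b centered lam s b = 0.
Proof.
rewrite sumrB sumr_const -mulr_natr -/nB mulrVK ?subrr //.
by rewrite unitfE gt_eqF ?nB_gt0.
Qed.

Lemma scale_gt0 lam : 0 < scale lam.
Proof.
rewrite invr_gt0 mulr_gt0 ?nB_gt0 // ltr_pwDr //.
by rewrite sumr_ge0 // => s _; rewrite sumr_ge0.
Qed.

Lemma scale_centered_le lam a b : `|scale lam * centered lam a b| <= nB^-1.
Proof.
set T := \sum_s \sum_b `|centered lam s b|.
have cT : `|centered lam a b| <= T.
  apply: le_trans (_ : \sum_b `|centered lam a b| <= _).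
    by rewrite (bigD1 b) //= lerDl sumr_ge0.
  by rewrite /T (bigD1 a) //= lerDl sumr_ge0 // => s _; rewrite sumr_ge0.
have T0 : 0 <= T by apply: le_trans cT.
rewrite normrM gtr0_norm ?scale_gt0 // /scale invfM mulrAC ler_pdivrMr ?ltr_pwDr //.
by apply: ler_wpM2l; [rewrite invr_ge0 ler0n | rewrite -/T; lra].
Qed.

Lemma z_strategy lam : strategy (z lam).
Proof.
move=> a; split => [b|].
  have := scale_centered_le lam a b; rewrite ler_norml /z => /andP[h _]; lra.
rewrite big_split /= -mulr_sumr centered_sum mulr0 addr0 sumr_const -mulr_natr.
by rewrite mulVf // gt_eqF ?nB_gt0.
Qed.

Lemma y_pert_strategy th lam : 0 <= th <= 1 -> strategy (y_pert th lam).
Proof.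
move=> /andP[th0 th1] a; have [y0 y1] := y_strat a; have [z0 z1] := z_strategy lam a.
split => [b|]; first by rewrite addr_ge0 ?mulr_ge0 ?subr_ge0.
by rewrite big_split /= -!mulr_sumr y1 z1; ring.
Qed.

Lemma gain_u1_pert_z lam s a :
  gain (u1_pert lam) (z lam) s a = scale lam * gain (centered lam) (centered lam) s a.
Proof.
rewrite !gainE mulr_sumr.
have -> : \sum_b (z lam s b - z lam a b) * u1_pert lam s b =
    \sum_b (z lam s b - z lam a b) * centered lam s b
    + (\sum_b (z lam s b - z lam a b)) * ((\sum_b' u1_pert lam s b') / nB).
  by rewrite mulr_suml -big_split /=; apply: eq_bigr => b _; rewrite /centered; ring.
rewrite sumrB /z !big_split /= -!mulr_sumr !centered_sum subrr mul0r addr0.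
by rewrite mulr_sumr; apply: eq_bigr => b _; ring.
Qed.

Lemma gain_pert th lam s a :
  gain (u1_pert lam) (y_pert th lam) s a = (1 - th) * gain G.1 y s a
  + ((1 - th) * (delta * gain y y s a + lam * gain tilt y s a)
     + th * scale lam * gain (centered lam) (centered lam) s a).
Proof.
rewrite -mulrA -gain_u1_pert_z !gainE !mulr_sumr -!big_split /= !mulr_sumr.
by rewrite -!big_split /=; apply: eq_bigr => b _; rewrite /y_pert /u1_pert; ring.
Qed.

Lemma bonus_diag th lam s : bonus th lam s s = 0.
Proof. by rewrite /bonus !sqdist_xx /gain subrr; ring. Qed.

Lemma D1_pert th lam : 0 < th < 1 -> (forall s a, s != a -> 0 < bonus th lam s a) ->
  D1 m (game_pert lam) (y_pert th lam).
Proof.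
move=> /andP[th0 th1] bonus_gt0 mu muM mu_neq.
have bonus_ge0 s a : 0 <= bonus th lam s a.
  by have [<-|sa] := eqVneq s a; [rewrite bonus_diag | exact/ltW/bonus_gt0].
rewrite -subr_gt0 Upay_mu0_sub // (eq_dsum _ (gain_pert th lam)) dsumD dsumZ.
have -> : dsum mu (fun s a => (1 - th) * (delta * gain y y s a + lam * gain tilt y s a)
    + th * scale lam * gain (centered lam) (centered lam) s a) = dsum mu (bonus th lam).
  rewrite /bonus !dsumD !dsumZ (dsum_gain_self _ muM); congr (_ * _ + _).
  by rewrite !dsumD !dsumZ (dsum_gain_self _ muM).
have := dsum_gt0 muM mu_neq bonus_ge0 bonus_gt0.
have C1part : 0 <= dsum mu (gain G.1 y).
  by rewrite -(Upay_mu0_sub _ _ muM) subr_ge0; exact: C1y.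
have : 0 <= (1 - th) * dsum mu (gain G.1 y) by rewrite mulr_ge0 // subr_ge0 ltW.
lra.
Qed.

Lemma centered_gap lam s : centered lam s bb - centered lam s bo =
  G.1 s bb - G.1 s bo + delta * (y s bb - y s bo) + lam * (2 * (enum_rank s : nat)%:R).
Proof.
have bo_bb : (bo == bb) = false by rewrite eq_sym (negbTE bb_bo).
by rewrite /centered /u1_pert /tilt !eqxx bo_bb (negbTE bb_bo) /=; ring.
Qed.

Lemma delta_gt0 : 0 < delta.
Proof. by rewrite divr_gt0. Qed.

(* Where y s = y a, the tilt (whose slope in lam is 2 (rank s - rank a) != 0)
   separates the centered rows for all small lam. *)
Lemma bonus_near_gt0 th s a : 0 < th < 1 -> s != a ->
  \forall lam \near 0^'+, 0 < bonus th lam s a.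
Proof.
move=> /andP[th0 th1] sa.
have scale_term lam : 0 <= th * scale lam * (sqdist (centered lam s) (centered lam a) / 2).
  by rewrite !mulr_ge0 ?divr_ge0 ?sqdist_ge0 ?ltW ?scale_gt0 ?invr_gt0.
have [/existsP[b yb]|/existsPn same] := boolP [exists b, y s b != y a b].
  have sq : 0 < delta * (sqdist (y s) (y a) / 2).
    by rewrite mulr_gt0 ?delta_gt0 ?divr_gt0 ?(sqdist_gt0 yb).
  apply: filterS (near0_affine_gt0 (gain tilt y s a) sq) => lam pos.
  have th1' : 0 < 1 - th by rewrite subr_gt0.
  by have := mulr_gt0 th1' pos; have := scale_term lam; rewrite /bonus; lra.
have yy b : y s b = y a b by apply/eqP; have := same b; rewrite negbK.
have rank_neq : 2 * ((enum_rank s : nat)%:R - (enum_rank a : nat)%:R) != 0 :> R.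
  rewrite mulf_neq0 ?pnatr_eq0 // subr_eq0 eqr_nat.
  by apply: contra sa => /eqP/val_inj/enum_rank_inj ->.
apply: filterS (near0_affine_neq0 (G.1 s bb - G.1 s bo - (G.1 a bb - G.1 a bo)) rank_neq).
move=> lam gap.
have [b cb] : exists b, centered lam s b != centered lam a b.
  apply/existsP; apply: contraNT gap => /existsPn eqc.
  have /negPn/eqP cbb := eqc bb; have /negPn/eqP cbo := eqc bo.
  have := centered_gap lam s; have := centered_gap lam a.
  rewrite !yy cbb cbo => ga gs; apply/eqP; rewrite ga in gs; lra.
have sq0 : sqdist (y s) (y a) = 0 by rewrite /sqdist big1 // => b' _; rewrite yy subrr expr0n.
have g0 : gain tilt y s a = 0 by rewrite gainE big1 // => b' _; rewrite yy subrr mul0r.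
rewrite /bonus sq0 g0 mul0r !(mulr0, add0r).
by rewrite !mulr_gt0 ?scale_gt0 ?invr_gt0 ?(sqdist_gt0 cb).
Qed.

Lemma ybar_ge0 b : 0 <= ybar b.
Proof.
have [m0 _] := m_distr; rewrite sumr_ge0 // => a _.
by rewrite mulr_ge0 //; case: (y_strat a).
Qed.

Lemma ybar_le1 b : ybar b <= 1.
Proof.
have [m0 <-] := m_distr; apply: ler_sum => a _; rewrite ler_piMr //.
exact: (mixed_le1 _ (y_strat a)).
Qed.

Lemma near_game_pert lam : (forall s b, `|lam * tilt s b| < delta) ->
  near_game eps G (game_pert lam).
Proof.
move=> tilt_small s b; have [y0 _] := y_strat s; have y1 := mixed_le1 b (y_strat s).
have := ybar_ge0 b; have := ybar_le1 b; have := delta_gt0; rewrite /= /u1_pert /u2_pert.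
have e2 : eps = delta + delta by rewrite /delta; field.
move=> d0 yb1 yb0; split.
  rewrite (_ : _ - _ = delta * y s b + lam * tilt s b); last by ring.
  apply: le_lt_trans (ler_normD _ _) _.
  have : `|delta * y s b| <= delta.
    by rewrite normrM (ger0_norm (ltW d0)) (ger0_norm (y0 b)); nra.
  have := tilt_small s b; lra.
rewrite (_ : _ - _ = delta * (y s b - ybar b)); last by ring.
have : `|y s b - ybar b| <= 1 by have := y0 b; rewrite ler_norml; lra.
rewrite normrM gtr0_norm // e2; nra.
Qed.

Lemma v2_pert lam : v2 m (game_pert lam) = v2 m G.
Proof.
apply: v2_ext => b /=; rewrite /u2_pert; have [_ m1] := m_distr.
under eq_bigr do rewrite mulrDr.
rewrite big_split /= -[RHS]addr0; congr (_ + _).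
under eq_bigr do rewrite mulrCA mulrBr.
by rewrite -mulr_sumr sumrB -mulr_suml m1 mul1r subrr mulr0.
Qed.

Lemma variance_eq : \sum_s m s * \sum_b y s b * (y s b - ybar b) = variance.
Proof.
have [_ m1] := m_distr.
apply/eqP; rewrite -subr_eq0 /variance /sqdist -sumrB; apply/eqP.
transitivity (\sum_s m s * \sum_b ybar b * (y s b - ybar b)).
  apply: eq_bigr => s _; rewrite -mulrBr -sumrB; congr (_ * _).
  by apply: eq_bigr => b _; ring.
under eq_bigr do rewrite mulr_sumr.
rewrite exchange_big /=; apply: big1 => b _.
under eq_bigr do rewrite mulrCA mulrBr.
by rewrite -mulr_sumr sumrB -mulr_suml m1 mul1r -/(ybar b) subrr mulr0.
Qed.

Lemma mean_pay_u2_pert : mean_pay m u2_pert y = mean_pay m G.2 y + delta * variance.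
Proof.
rewrite /mean_pay -variance_eq mulr_sumr -big_split /=; apply: eq_bigr => s _.
rewrite mulrCA -mulrDr; congr (_ * _); rewrite /mixpay mulr_sumr -big_split /=.
by apply: eq_bigr => b _; rewrite /u2_pert; ring.
Qed.

Lemma variance_gt0 : 0 < variance.
Proof.
have [a ya] : exists a, y a bb != ybar bb.
  have [h|h] := eqVneq (y a0 bb) (ybar bb); last by exists a0.
  by exists a1; rewrite -h eq_sym.
apply: lt_le_trans (_ : 0 < m a * sqdist (y a) ybar) _.
  by rewrite mulr_gt0 ?(sqdist_gt0 ya).
rewrite /variance (bigD1 a) //= lerDl sumr_ge0 // => s _.
by rewrite mulr_ge0 ?sqdist_ge0 ?(ltW (m_gt0 s)).
Qed.

Lemma D2_pert th lam : 0 <= th <= 1 ->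
  0 < delta * variance - th * (delta * variance + 2 * paybound u2_pert) ->
  D2 m (game_pert lam) (y_pert th lam).
Proof.
move=> /andP[th0 th1] th_small.
rewrite /D2 v2_pert Upay_mu0 /= mean_pay_comb mean_pay_u2_pert.
have := C2y; rewrite /C2 Upay_mu0 => C2'.
have := mean_pay_abs_le u2_pert m_distr (z_strategy lam); rewrite ler_norml => /andP[zP _].
have := v2_le_paybound (game_pert lam) bb m_distr; rewrite v2_pert /= => v2P.
nra.
Qed.

Lemma perturbation_exists : exists G', near_game eps G G' /\ exists w, Ehat m G' w.
Proof.
pose k := delta * variance + 2 * paybound u2_pert.
have [th [th0 th1 th_small]] : exists th, [/\ 0 < th, th < 1 & 0 < delta * variance - th * k].
  apply: (@filter_ex _ (0^'+)); near=> th; split.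
  - by near: th; exact: nbhs_right_gt.
  - by near: th; exact: nbhs_right_lt.
  - near: th; apply: filterS (near0_affine_gt0 (- k) (mulr_gt0 delta_gt0 variance_gt0)).
    by move=> th; rewrite mulrN.
have th_in : 0 < th < 1 by rewrite th0 th1.
have tilt_near : \forall lam \near 0^'+, forall p : S * B, `|lam * tilt p.1 p.2| < delta.
  by apply: filter_forall => p; exact: near0_abs_lt delta_gt0.
have bonus_near : \forall lam \near 0^'+,
    forall p : S * S, p.1 != p.2 -> 0 < bonus th lam p.1 p.2.
  apply: filter_forall => -[s a] /=; have [<-|sa] := eqVneq s a.
    by apply: nearW.
  by apply: filterS (bonus_near_gt0 th_in sa) => lam h _.
have [lam [tilt_small bonus_pos]] := filter_ex (filterI tilt_near bonus_near).
exists (game_pert lam); split.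
  by apply: near_game_pert => s b; exact: (tilt_small (s, b)).
have th01 : 0 <= th <= 1 by rewrite !ltW.
exists (Upay (game_pert lam).1 (mu0 m) (y_pert th lam),
        Upay (game_pert lam).2 (mu0 m) (y_pert th lam)), (y_pert th lam).
split; first exact: y_pert_strategy.
split; first by apply: D1_pert => // s a sa; exact: (bonus_pos (s, a)).
by split => //; exact: D2_pert.
Unshelve. all: by end_near.
Qed.

End Perturbation.

Lemma condB_perturbation (R : realType) (S B : finType) (m : S -> R) (G : game R S B) :
  (forall s, 0 < m s) -> distrib m -> condB m G ->
  forall eps, 0 < eps -> exists G', near_game eps G G' /\ exists w, Ehat m G' w.
Proof.
move=> m_gt0 m_distr [y [y_strat [[a0 [a1 y_neq]] [C1y C2y]]]] eps eps_gt0.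
have [bb y_bb] : exists b, y a0 b != y a1 b.
  apply/existsP; apply: contra_notT y_neq => /existsPn same.
  by apply/funext => b; apply/eqP; rewrite -[_ == _]negbK same.
have [bo bb_bo] : exists b, bb != b.
  apply/existsP; apply: contraNT y_bb => /existsPn single.
  have sum_single a : \sum_b y a b = y a bb.
    rewrite (bigD1 bb) //= big1 ?addr0 // => b b_bb.
    by have := single b; rewrite negbK eq_sym (negbTE b_bb).
  by have [_] := y_strat a0; have [_] := y_strat a1; rewrite !sum_single => -> ->.
exact: perturbation_exists m_gt0 m_distr y_strat C1y C2y eps_gt0 y_bb bb_bo.
Qed.

Section NormalForm.
Variables (R : realType) (S B : finType) (m : S -> R) (G : game R S B).

Definition spread (e : S -> B -> R) := \sum_(p : S * S * B) `|e p.1.1 p.2 - e p.1.2 p.2|.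

(* A condition-B witness y written as y a b = c b + tau * e a b with a mixed
   base action c, a scale tau and a normalized direction e; this is the
   form that survives limits. *)
Record normal_form (c : B -> R) (tau : R) (e : S -> B -> R) : Prop := NormalForm {
  nf_mixed : mixed c;
  nf_tau_gt0 : 0 < tau;
  nf_tau_le : tau <= #|{: S * B}|%:R;
  nf_e_le1 : forall a b, `|e a b| <= 1;
  nf_e_sum : forall a, \sum_b e a b = 0;
  nf_support : forall a b, 0 <= e a b \/ #|B|%:R^-1 <= c b;
  nf_spread : #|{: S * B}|%:R^-1 <= spread e;
  nf_C1 : forall mu, inM m mu -> 0 <= dsum mu (gain G.1 e);
  nf_C2 : v2 m G <= mean_pay m G.2 (fun _ => c) + tau * mean_pay m G.2 e;
  nf_ge0 : forall a b, 0 <= c b + tau * e a b }.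

Lemma spread_ge (e : S -> B -> R) a a' b : `|e a b - e a' b| <= spread e.
Proof.
by rewrite /spread (bigD1 (a, a', b)) //= lerDl sumr_ge0.
Qed.

Lemma gain_decomp (v e : S -> B -> R) (c : B -> R) t s a :
  gain v (fun a b => c b + t * e a b) s a = t * gain v e s a.
Proof. by rewrite !gainE mulr_sumr; apply: eq_bigr => b _; ring. Qed.

Lemma mean_pay_decomp (v e : S -> B -> R) (c : B -> R) t :
  mean_pay m v (fun a b => c b + t * e a b) = mean_pay m v (fun _ => c) + t * mean_pay m v e.
Proof.
rewrite /mean_pay mulr_sumr -big_split /=; apply: eq_bigr => s _.
by rewrite /mixpay !mulr_sumr -!big_split /=; apply: eq_bigr => b _; ring.
Qed.

Lemma nf_mean_ge0 c tau e : normal_form c tau e -> 0 <= mean_pay m G.2 e.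
Proof.
case=> c_mixed tau_gt0 _ _ _ _ _ _ C2 _; have := mean_pay_le_v2 m G c_mixed.
by rewrite -(pmulr_rge0 _ tau_gt0); lra.
Qed.

End NormalForm.

Section Normalization.
Variables (R : realType) (S B : finType) (m : S -> R) (G : game R S B) (y : S -> B -> R).
Variables (a0 a1 : S) (b0 : B).
Hypotheses (y_strat : strategy y) (y_neq : y a0 <> y a1) (C1y : C1 m G y) (C2y : C2 m G y).

Definition argmin_row b := [arg min_(a < a0) y a b]%O.
Definition ymin b := y (argmin_row b) b.
Definition btop := [arg max_(b > b0) y a0 b]%O.
(* The column minima, with the missing mass 1 - sum ymin put on the action
   that a0 plays most; this keeps c bounded away from 0 where e can be < 0. *)
Definition cnorm b := ymin b + (b == btop)%:R * (1 - \sum_b' ymin b').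
Definition tnorm := \sum_a \sum_b (y a b - ymin b).
Definition enorm a b := (y a b - cnorm b) / tnorm.

Lemma y_ge0 a b : 0 <= y a b.
Proof. by have [y0 _] := y_strat a. Qed.

Lemma ymin_le a b : ymin b <= y a b.
Proof. by rewrite /ymin /argmin_row; case: arg_minP => // a' _; apply. Qed.

Lemma btop_ge b : y a0 b <= y a0 btop.
Proof. by rewrite /btop; case: arg_maxP => // b' _; apply. Qed.

Lemma excess_ge0 a b : 0 <= y a b - ymin b.
Proof. by rewrite subr_ge0 ymin_le. Qed.

Lemma cnorm_other b : b != btop -> cnorm b = ymin b.
Proof. by move/negbTE => nb; rewrite /cnorm nb mul0r addr0. Qed.

Lemma slack_ge0 : 0 <= 1 - \sum_b ymin b.
Proof.
by have [_ <-] := y_strat a0; rewrite subr_ge0; apply: ler_sum => b _; exact: ymin_le.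
Qed.

Lemma cnorm_mixed : mixed cnorm.
Proof.
split=> [b|]; first by rewrite addr_ge0 ?mulr_ge0 ?slack_ge0 ?y_ge0.
have ind : \sum_b ((b == btop)%:R : R) = 1.
  by rewrite (bigD1 btop) //= eqxx big1 ?addr0 // => b /negbTE ->.
by rewrite big_split /= -mulr_suml ind mul1r addrC subrK.
Qed.

Lemma tnorm_gt0 : 0 < tnorm.
Proof.
rewrite lt_def sumr_ge0 ?andbT => [|a _]; last by rewrite sumr_ge0 // => b _; exact: excess_ge0.
apply: contra_notN y_neq => /eqP tnorm0.
have row0 a : \sum_b (y a b - ymin b) = 0.
  apply: (psumr_eq0P _ tnorm0) => // a' _.
  by rewrite sumr_ge0 // => b _; exact: excess_ge0.
have yE a b : y a b = ymin b.
  apply/eqP; rewrite -subr_eq0; apply/eqP.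
  by apply: (psumr_eq0P _ (row0 a)) => // b' _; exact: excess_ge0.
by apply/funext => b; rewrite !yE.
Qed.

Lemma row_excess_le a : \sum_b (y a b - ymin b) <= tnorm.
Proof.
rewrite /tnorm (bigD1 a) //= lerDl sumr_ge0 // => a' _.
by rewrite sumr_ge0 // => b _; exact: excess_ge0.
Qed.

Lemma y_decomp : y = fun a b => cnorm b + tnorm * enorm a b.
Proof.
apply/funext => a; apply/funext => b.
by rewrite /enorm mulrCA divff ?mulr1 ?subrKC // gt_eqF ?tnorm_gt0.
Qed.

Lemma dev_le a b : `|y a b - cnorm b| <= tnorm.
Proof.
have [->|nb] := eqVneq b btop; last first.
  rewrite cnorm_other // ger0_norm ?excess_ge0 //; apply: le_trans (row_excess_le a).
  by rewrite (bigD1 b) //= lerDl sumr_ge0 // => b' _; exact: excess_ge0.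
have [_ y1] := y_strat a; have [_ c1] := cnorm_mixed.
have : \sum_b (y a b - cnorm b) = 0 by rewrite sumrB y1 c1 subrr.
rewrite (bigD1 btop) //= (eq_bigr (fun b => y a b - ymin b)) => [top|b' nb']; last first.
  by rewrite cnorm_other.
have rest0 : 0 <= \sum_(b | b != btop) (y a b - ymin b).
  by rewrite sumr_ge0 // => b' _; exact: excess_ge0.
have rest_le : \sum_(b | b != btop) (y a b - ymin b) <= tnorm.
  apply: le_trans (row_excess_le a); rewrite [X in _ <= X](bigD1 btop) //= lerDr.
  exact: excess_ge0.
by rewrite ler_norml; lra.
Qed.

Lemma enorm_le1 a b : `|enorm a b| <= 1.
Proof.
by rewrite /enorm normrM normfV (gtr0_norm tnorm_gt0) ler_pdivrMr ?tnorm_gt0 // mul1r dev_le.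
Qed.

Lemma enorm_sum a : \sum_b enorm a b = 0.
Proof.
have [_ y1] := y_strat a; have [_ c1] := cnorm_mixed.
by rewrite -mulr_suml sumrB y1 c1 subrr mul0r.
Qed.

Lemma cnorm_top_ge : #|B|%:R^-1 <= cnorm btop.
Proof.
have [_ y1] := y_strat a0.
have NB0 : 0 < #|B|%:R :> R by rewrite ltr0n; apply/card_gt0P; exists b0.
have top : 1 <= y a0 btop * #|B|%:R.
  rewrite (_ : _ * _ = \sum_(b : B) y a0 btop); last by rewrite sumr_const mulr_natr.
  by rewrite -{1}y1; apply: ler_sum => b _; exact: btop_ge.
have rest : \sum_(b | b != btop) ymin b <= \sum_(b | b != btop) y a0 b.
  by apply: ler_sum => b _; exact: ymin_le.
have cnormE : cnorm btop = 1 - \sum_(b | b != btop) ymin b.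
  by rewrite /cnorm eqxx mul1r (bigD1 btop) //=; ring.
have y1' : 1 = y a0 btop + \sum_(b | b != btop) y a0 b by rewrite -y1 (bigD1 btop).
rewrite cnormE -(ler_pM2r NB0) mulVf ?gt_eqF //; nra.
Qed.

Lemma enorm_support a b : 0 <= enorm a b \/ #|B|%:R^-1 <= cnorm b.
Proof.
have [->|nb] := eqVneq b btop; [right; exact: cnorm_top_ge | left].
by rewrite /enorm cnorm_other // divr_ge0 ?excess_ge0 ?ltW ?tnorm_gt0.
Qed.

Lemma tnorm_le : tnorm <= #|{: S * B}|%:R.
Proof.
have -> : #|{: S * B}|%:R = \sum_(p : S * B) (1 : R) by rewrite sumr_const.
rewrite /tnorm pair_bigA /=; apply: ler_sum => -[a b] _.
have := y_ge0 (argmin_row b) b; have := mixed_le1 b (y_strat a); rewrite /ymin /=; lra.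
Qed.

Lemma enorm_spread : #|{: S * B}|%:R^-1 <= spread enorm.
Proof.
pose ex (p : S * B) := y p.1 p.2 - ymin p.2.
pose p := [arg max_(p > (a0, b0)) ex p]%O.
have p_max q : ex q <= ex p by rewrite /p; case: arg_maxP => // q' _; apply.
have K0 : 0 < #|{: S * B}|%:R :> R by rewrite ltr0n; apply/card_gt0P; exists (a0, b0).
have tnorm_le_ex : tnorm <= ex p * #|{: S * B}|%:R.
  rewrite /tnorm pair_bigA /= -[X in _ * X]sumr_const mulr_sumr.
  by apply: ler_sum => -[a b] _; rewrite mulr1; exact: (p_max (a, b)).
apply: le_trans (spread_ge _ p.1 (argmin_row p.2) p.2).
have -> : enorm p.1 p.2 - enorm (argmin_row p.2) p.2 = ex p / tnorm.
  by rewrite /enorm /ex /ymin -mulrBl; congr (_ / _); ring.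
rewrite ger0_norm ?divr_ge0 ?excess_ge0 ?(ltW tnorm_gt0) //.
by rewrite ler_pdivlMr ?tnorm_gt0 // mulrC ler_pdivrMr.
Qed.

Lemma normalization : normal_form m G cnorm tnorm enorm.
Proof.
split; [exact: cnorm_mixed | exact: tnorm_gt0 | exact: tnorm_le | exact: enorm_le1
  | exact: enorm_sum | exact: enorm_support | exact: enorm_spread | |  | ].
- move=> mu muM; have := C1y muM; rewrite -subr_ge0 Upay_mu0_sub // y_decomp.
  by rewrite (eq_dsum _ (gain_decomp _ _ _ _)) dsumZ pmulr_rge0 ?tnorm_gt0.
- by have := C2y; rewrite /C2 Upay_mu0 y_decomp mean_pay_decomp.
- by move=> a b; have := y_ge0 a b; rewrite {1}y_decomp.
Qed.

End Normalization.

Section Convergence.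
Variables (R : realType) (S B : finType) (T : Type) (F : set_system T).
Context {FF : Filter F}.

Lemma cvg_sum (I : finType) (f : I -> T -> R) (l : I -> R) :
  (forall i, f i t @[t --> F] --> l i) -> \sum_i f i t @[t --> F] --> \sum_i l i.
Proof. by move=> fl; apply: cvg_big => [|i _]; [exact: add_continuous | exact: fl]. Qed.

Lemma mixpay_cvg (v : T -> S -> B -> R) (v0 : S -> B -> R) (x : T -> B -> R) (x0 : B -> R) s :
  (forall b, v t s b @[t --> F] --> v0 s b) -> (forall b, x t b @[t --> F] --> x0 b) ->
  mixpay (v t) s (x t) @[t --> F] --> mixpay v0 s x0.
Proof. by move=> vl xl; apply: cvg_sum => b; apply: cvgM. Qed.

Lemma gain_cvg (v : T -> S -> B -> R) (v0 : S -> B -> R) (x : T -> S -> B -> R)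
    (x0 : S -> B -> R) s a :
  (forall b, v t s b @[t --> F] --> v0 s b) -> (forall a b, x t a b @[t --> F] --> x0 a b) ->
  gain (v t) (x t) s a @[t --> F] --> gain v0 x0 s a.
Proof. by move=> vl xl; apply: cvgB; apply: mixpay_cvg. Qed.

Lemma dsum_cvg mu (f : T -> S -> S -> R) (f0 : S -> S -> R) :
  (forall s a, f t s a @[t --> F] --> f0 s a) -> dsum mu (f t) @[t --> F] --> dsum mu f0.
Proof. by move=> fl; do 2![apply: cvg_sum => ?]; apply: cvgM => //; exact: cvg_cst. Qed.

Lemma mean_pay_cvg (m : S -> R) (v : T -> S -> B -> R) (v0 : S -> B -> R)
    (x : T -> S -> B -> R) (x0 : S -> B -> R) :
  (forall s b, v t s b @[t --> F] --> v0 s b) -> (forall a b, x t a b @[t --> F] --> x0 a b) ->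
  mean_pay m (v t) (x t) @[t --> F] --> mean_pay m v0 x0.
Proof.
by move=> vl xl; apply: cvg_sum => s; apply: cvgM; [exact: cvg_cst | exact: mixpay_cvg].
Qed.

End Convergence.

Section Limit.
Variables (R : realType) (S B : finType) (m : S -> R) (G : game R S B).
Variables (Gs : nat -> game R S B) (cs : nat -> B -> R) (ts : nat -> R) (es : nat -> S -> B -> R).
Variables (c : B -> R) (tau : R) (e : S -> B -> R).
Unset Implicit Arguments.
Hypotheses (nf : forall n, normal_form m (Gs n) (cs n) (ts n) (es n))
  (G1_cvg : forall s b, (Gs n).1 s b @[n --> \oo] --> G.1 s b)
  (G2_cvg : forall s b, (Gs n).2 s b @[n --> \oo] --> G.2 s b)
  (c_cvg : forall b, cs n b @[n --> \oo] --> c b)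
  (tau_cvg : ts n @[n --> \oo] --> tau)
  (e_cvg : forall a b, es n a b @[n --> \oo] --> e a b).
Set Implicit Arguments.

Lemma le_lim (u v : nat -> R) (l l' : R) :
  u n @[n --> \oo] --> l -> v n @[n --> \oo] --> l' -> (forall n, u n <= v n) -> l <= l'.
Proof. by move=> ul vl uv; apply: ler_cvg_to ul vl _; apply: nearW. Qed.

Lemma eq_lim_cst (u : nat -> R) (l k : R) :
  u n @[n --> \oo] --> l -> (forall n, u n = k) -> l = k.
Proof.
move=> ul uk; apply/eqP; rewrite eq_le.
by rewrite (le_lim ul (cvg_cst k)) ?(le_lim (cvg_cst k) ul) // => n; rewrite uk.
Qed.

Lemma lim_mixed : mixed c.
Proof.
split=> [b|]; first by apply: le_lim (cvg_cst 0) (c_cvg b) _ => n; case: (nf_mixed (nf n)).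
by apply: eq_lim_cst (cvg_sum c_cvg) _ => n; case: (nf_mixed (nf n)).
Qed.

Lemma lim_tau_ge0 : 0 <= tau.
Proof. by apply: le_lim (cvg_cst 0) tau_cvg _ => n; rewrite ltW ?(nf_tau_gt0 (nf n)). Qed.

Lemma lim_e_sum a : \sum_b e a b = 0.
Proof. by apply: eq_lim_cst (cvg_sum (e_cvg a)) _ => n; exact: nf_e_sum. Qed.

Lemma lim_support a b : c b = 0 -> 0 <= e a b.
Proof.
move=> cb0; have cb_lt : c b < #|B|%:R^-1.
  by rewrite cb0 invr_gt0 ltr0n; apply/card_gt0P; exists b.
apply: ler_cvg_to (cvg_cst 0) (e_cvg a b) _.
apply: filterS (cvgr_lt _ (c_cvg b) _ cb_lt) => n cn.
by have [//|] := nf_support (nf n) a b; rewrite leNgt cn.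
Qed.

Lemma card_SB_gt0 : (0 < #|{: S * B}|)%N.
Proof. by rewrite -(ltr0n R) (lt_le_trans (nf_tau_gt0 (nf 0)) (nf_tau_le (nf 0))). Qed.

Lemma lim_spread : [exists p : S * S * B, e p.1.1 p.2 != e p.1.2 p.2].
Proof.
have K0 : 0 < #|{: S * B}|%:R^-1 :> R by rewrite invr_gt0 ltr0n card_SB_gt0.
have spread_cvg : spread (es n) @[n --> \oo] --> spread e.
  by apply: cvg_sum => p; apply: cvg_norm; apply: cvgB.
have sp : #|{: S * B}|%:R^-1 <= spread e.
  by apply: le_lim (cvg_cst _) spread_cvg _ => n; exact: nf_spread.
move: sp; apply: contraLR => /existsPn same; rewrite -ltNge (_ : spread e = 0) //.
by rewrite /spread big1 // => p _; move/negPn/eqP: (same p) => ->; rewrite subrr normr0.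
Qed.

Lemma lim_C1 mu : inM m mu -> 0 <= dsum mu (gain G.1 e).
Proof.
move=> muM; apply: le_lim (cvg_cst 0) (dsum_cvg (fun s a => gain_cvg (G1_cvg s) e_cvg)) _.
by move=> n; exact: nf_C1.
Qed.

Lemma lim_mean_ge0 : 0 <= mean_pay m G.2 e.
Proof.
apply: le_lim (cvg_cst 0) (mean_pay_cvg G2_cvg e_cvg) _ => n.
exact: nf_mean_ge0 (nf n).
Qed.

Lemma lim_C2 : v2 m G <= mean_pay m G.2 (fun _ => c) + tau * mean_pay m G.2 e.
Proof.
have /card_gt0P[[_ b0] _] := card_SB_gt0.
have [bm ->] := v2_attain m G b0.
apply: le_lim (cvg_sum (fun s => cvgM (cvg_cst (m s)) (G2_cvg s bm))) _ _.
  exact: cvgD (mean_pay_cvg G2_cvg (fun _ => c_cvg)) (cvgM tau_cvg (mean_pay_cvg G2_cvg e_cvg)).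
by move=> n; apply: le_trans (v2_ge _ _ bm) (nf_C2 (nf n)).
Qed.

Lemma lim_ge0 a b : 0 <= c b + tau * e a b.
Proof.
apply: le_lim (cvg_cst 0) (cvgD (c_cvg b) (cvgM tau_cvg (e_cvg a b))) _ => n.
exact: nf_ge0.
Qed.

Lemma limit_scale : exists eta, [/\ 0 < eta, forall a b, 0 <= c b + eta * e a b &
  v2 m G <= mean_pay m G.2 (fun _ => c) + eta * mean_pay m G.2 e].
Proof.
have := lim_tau_ge0; rewrite le0r => /orP[/eqP tau0|tau_gt0]; last first.
  by exists tau; split; [| exact: lim_ge0 | exact: lim_C2].
(* tau = 0: scale e down until c + eta e is nonnegative, which lim_support allows *)
have C2c : v2 m G <= mean_pay m G.2 (fun _ => c) by have := lim_C2; rewrite tau0 mul0r addr0.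
have [c_ge0 _] := lim_mixed.
have pos_near : \forall eta \near 0^'+, forall p : S * B, 0 <= c p.2 + eta * e p.1 p.2.
  apply: filter_forall => -[a b] /=; have [cb0|cb_neq0] := eqVneq (c b) 0.
    apply: filterS (nbhs_right_gt 0) => eta eta_gt0.
    by rewrite cb0 add0r mulr_ge0 ?(ltW eta_gt0) ?(lim_support _ cb0).
  have : 0 < c b by rewrite lt_def cb_neq0 c_ge0.
  by move/(near0_affine_gt0 (e a b)); apply: filterS => eta /ltW.
have [eta [eta_gt0 pos]] := filter_ex (filterI (nbhs_right_gt 0) pos_near).
exists eta; split=> // [a b|]; first exact: (pos (a, b)).
by have := mulr_ge0 (ltW eta_gt0) lim_mean_ge0; lra.
Qed.

Lemma condB_of_limit : condB m G.
Proof.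
have [eta [eta_gt0 y_ge0 C2eta]] := limit_scale.
have [c_ge0 c_sum] := lim_mixed.
exists (fun a b => c b + eta * e a b); split.
  move=> a; split; first exact: y_ge0.
  by rewrite big_split /= -mulr_sumr lim_e_sum c_sum mulr0 addr0.
split.
  have /existsP[[[a a'] b] /= e_neq] := lim_spread.
  exists a, a' => /(congr1 (fun f => f b)) /addrI /(mulfI (lt0r_neq0 eta_gt0)) /eqP.
  exact/negP.
split; last by rewrite /C2 Upay_mu0 mean_pay_decomp.
move=> mu muM; rewrite -subr_ge0 Upay_mu0_sub //.
by rewrite (eq_dsum _ (gain_decomp _ _ _ _)) dsumZ mulr_ge0 ?(ltW eta_gt0) ?(lim_C1 muM).
Qed.

End Limit.

Section Compactness.
Variable R : realType.

Lemma increasing_seq_ge (f : nat -> nat) : increasing_seq f -> forall k, (k <= f k)%N.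
Proof.
move=> f_incr; elim=> // k IH; apply: leq_ltn_trans IH _.
by have := f_incr k.+1 k; rewrite /= ltnn ltnNge => /negbT.
Qed.

Lemma cvgn_subseq (f : nat -> nat) (u : nat -> R) :
  increasing_seq f -> cvgn u -> cvgn (fun n => u (f n)).
Proof.
move=> f_incr u_cvg; apply/cvg_ex; exists (limn u).
apply: (@cvg_comp _ _ _ f u _ _ _ _ u_cvg).
move=> P [N _ PN]; exists N => // k /= Nk; apply: PN.
exact: leq_trans Nk (increasing_seq_ge f_incr k).
Qed.

Lemma bolzano_weierstrass_fin (I : finType) (x : nat -> I -> R) (M : R) :
  (forall n i, `|x n i| <= M) ->
  exists2 f : nat -> nat, increasing_seq f & forall i, cvgn (fun n => x (f n) i).
Proof.
move=> x_bound.
suff [f f_incr f_cvg] : exists2 f : nat -> nat, increasing_seq f &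
    forall i, i \in enum I -> cvgn (fun n => x (f n) i).
  by exists f => // i; apply: f_cvg; rewrite mem_enum.
elim: (enum I) => [|i0 s [f f_incr f_cvg]]; first by exists id.
have u_bound : bounded_fun (fun n => x (f n) i0).
  exists M; split; first by rewrite num_real.
  by move=> M' MM' n _; apply: le_trans (x_bound _ _) (ltW MM').
have [g g_incr g_cvg] := bolzano_weierstrass u_bound.
exists (f \o g) => [n k|i]; first by rewrite /= !f_incr.
rewrite in_cons => /orP[/eqP -> //|i_s].
exact: cvgn_subseq (fun n => x (f n) i) g_incr (f_cvg i i_s).
Qed.

End Compactness.

Lemma cvg_of_dist_lt_inv (R : realType) (u : nat -> R) (l : R) :
  (forall n, `|u n - l| < n.+1%:R^-1) -> u n @[n --> \oo] --> l.
Proof.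
move=> u_close; apply/cvgrPdist_lt => eps eps_gt0; near=> n.
rewrite distrC; apply: lt_le_trans (u_close n) _.
rewrite -[leRHS]invrK lef_pV2 ?posrE ?invr_gt0 ?ltr0Sn //.
apply: le_trans (_ : n%:R <= _); last by rewrite ler_nat.
by near: n; exact: nbhs_infty_ger.
Unshelve. all: by end_near.
Qed.

Lemma condB_normal_form (R : realType) (S B : finType) (m : S -> R) (G : game R S B) :
  condB m G -> exists c tau e, normal_form m G c tau e.
Proof.
move=> [y [y_strat [[a0 [a1 y_neq]] [C1y C2y]]]].
have [b0 _] : exists b : B, true.
  have [_] := y_strat a0; case: (pickP B) => [b _|B0]; first by exists b.
  by rewrite big_pred0 // => /eqP; rewrite eq_sym oner_eq0.
exists (cnorm y a0 b0), (tnorm y a0), (enorm y a0 b0).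
exact: normalization y_strat y_neq C1y C2y.
Qed.

Lemma not_condB_open (R : realType) (S B : finType) (m : S -> R) (G : game R S B) :
  ~ condB m G -> exists eps : R, 0 < eps /\ forall G', near_game eps G G' -> ~ condB m G'.
Proof.
move=> notB; apply: contra_notP notB => no_eps.
have nf_near n : exists X : game R S B * (B -> R) * R * (S -> B -> R),
    near_game n.+1%:R^-1 G X.1.1.1 /\ normal_form m X.1.1.1 X.1.1.2 X.1.2 X.2.
  have [G' [G'_near /condB_normal_form [c [tau [e nf]]]]] :
      exists G', near_game n.+1%:R^-1 G G' /\ condB m G'.
    apply: contra_notP no_eps => no_G'; exists n.+1%:R^-1; split; first by rewrite invr_gt0.
    by move=> G' G'_near G'_B; apply: no_G'; exists G'.
  by exists (G', c, tau, e).
have [X X_spec] := choice nf_near.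
pose x n (i : option (B + S * B)) : R := match i with
  | Some (inl b) => (X n).1.1.2 b | Some (inr p) => (X n).2 p.1 p.2 | None => (X n).1.2 end.
have x_bound n i : `|x n i| <= #|{: S * B}|%:R + 1.
  have [_ nf] := X_spec n; have K0 : 0 <= #|{: S * B}|%:R :> R by [].
  case: i => [[b|[a b]]|] /=.
  - have [c_ge0 _] := nf_mixed nf; rewrite ger0_norm //.
    by apply: le_trans (mixed_le1 b (nf_mixed nf)) _; lra.
  - by apply: le_trans (nf_e_le1 nf a b) _; lra.
  - by rewrite gtr0_norm ?(nf_tau_gt0 nf) //; apply: le_trans (nf_tau_le nf) _; lra.
have [f f_incr f_cvg] := bolzano_weierstrass_fin x_bound.
have G_close n : near_game n.+1%:R^-1 G (X (f n)).1.1.1.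
  have [X_near _] := X_spec (f n); move=> s b; have [h1 h2] := X_near s b.
  have le_inv : (f n).+1%:R^-1 <= n.+1%:R^-1 :> R.
    by rewrite lef_pV2 ?posrE ?ltr0Sn // ler_nat ltnS increasing_seq_ge.
  by split; apply: lt_le_trans le_inv.
apply: (@condB_of_limit _ _ _ m G (fun n => (X (f n)).1.1.1) (fun n => (X (f n)).1.1.2)
  (fun n => (X (f n)).1.2) (fun n => (X (f n)).2)
  (fun b => limn (fun n => x (f n) (Some (inl b)))) (limn (fun n => x (f n) None))
  (fun a b => limn (fun n => x (f n) (Some (inr (a, b)))))).
- by move=> n; have [] := X_spec (f n).
- by move=> s b; apply: cvg_of_dist_lt_inv => n; have [] := G_close n s b.
- by move=> s b; apply: cvg_of_dist_lt_inv => n; have [] := G_close n s b.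
- by move=> b; exact: (f_cvg (Some (inl b))).
- exact: (f_cvg None).
- by move=> a b; exact: (f_cvg (Some (inr (a, b)))).
Qed.

Section MarkovChain.
Variables (R : realType) (S : finType) (p : S -> S -> R) (m : S -> R).
Hypotheses (p_stoch : mc_stochastic p) (p_irr : mc_irreducible p) (m_inv : mc_invariant p m).

Lemma nstep_ge0 n s t : 0 <= nstep p n s t.
Proof.
have [p_ge0 _] := p_stoch; elim: n t => [|n IH] t /=; first by rewrite ler0n.
by rewrite sumr_ge0 // => u _; rewrite mulr_ge0.
Qed.

Lemma nstep_invariant n t : \sum_s m s * nstep p n s t = m t.
Proof.
have [_ m_inv1] := m_inv; elim: n t => [|n IH] t /=.
  by rewrite (bigD1 t) //= eqxx mulr1 big1 ?addr0 // => s /negbTE ->; rewrite mulr0.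
under eq_bigr do rewrite mulr_sumr.
rewrite exchange_big /= -[RHS]m_inv1; apply: eq_bigr => u _.
by rewrite -IH mulr_suml; apply: eq_bigr => s _; rewrite mulrA.
Qed.

Lemma invariant_gt0 t : 0 < m t.
Proof.
have [[m_ge0 m_sum] _] := m_inv.
have [s0 m_s0] : exists s, 0 < m s.
  apply/existsP; apply: contraT => /existsPn m_le0.
  have : \sum_s m s <= 0 by apply: sumr_le0 => s _; rewrite leNgt m_le0.
  by rewrite m_sum ler10.
have [n p_n] := p_irr s0 t.
rewrite -(nstep_invariant n t) (bigD1 s0) //=.
apply: lt_le_trans (mulr_gt0 m_s0 p_n) _; rewrite lerDl.
by rewrite sumr_ge0 // => s _; rewrite mulr_ge0 ?nstep_ge0.
Qed.

End MarkovChain.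

Theorem theorem3 (R : realType) (S B : finType) (p : S -> S -> R) (m : S -> R) :
  mc_stochastic p -> mc_irreducible p -> mc_aperiodic p -> mc_invariant p m ->
  forall G : game R S B,
    (condB m G ->
       forall eps : R, 0 < eps ->
         exists G' : game R S B, near_game eps G G' /\ exists w, Ehat m G' w) /\
    (~ condB m G ->
       exists eps : R, 0 < eps /\
         forall G' : game R S B, near_game eps G G' -> ~ condB m G').
Proof.
move=> p_stoch p_irr _ m_inv G; have m_distr : distrib m by case: m_inv.
split; first exact: condB_perturbation (invariant_gt0 p_stoch p_irr m_inv) m_distr.
exact: not_condB_open.
Qed.
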